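(* The bound $$\int_{-\infty}^s\int_{-\infty}^{s'} \exp \bigl(-a|r-r'| - b|r-s|-c|r'-s'|-d|r-s'|-e|r'-s|\bigr)\,dr'\,dr \le \frac{10\, e^{-(d\wedge e)|s-s'|}}{(b+d)(c+e) + a((b+d)\wedge(c+e))}$$ holds for every $s,s' \in \mathbb{R}$ and every $a,b,c,d,e > 0$. *)

From HB Require Import structures.
From mathcomp Require Import all_boot all_order all_algebra.
From mathcomp Require Export all_classical all_reals all_analysis.
Set Implicit Arguments. Unset Strict Implicit. Unset Printing Implicit Defensive.
Import Order.TTheory GRing.Theory Num.Theory.
Local Open Scope ring_scope.

Definition kernelA8 (R : realType) (a b c d e s s' r r' : R) : R :=
  expR (- (a * `|r - r'|) - b * `|r - s| - c * `|r' - s'|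
        - d * `|r - s'| - e * `|r' - s|).

From HB Require Import structures.
From mathcomp Require Import all_boot all_order all_algebra.
From mathcomp Require Import all_classical all_reals all_analysis.
From mathcomp Require Import measurable_realfun ring lra.
Import Order.TTheory GRing.Theory Num.Theory numFieldNormedType.Exports.
Local Open Scope classical_set_scope.
Local Open Scope ring_scope.

(* Split according to the order of s and s'.  If s' <= s, then |r' - s| =
   (s - s') + (s' - r') for r' < s', which splits off the factor
   e^{-e(s - s')}, and b|r - s| + d|r - s'| >= (b + d)|r - p| for the
   barycenter p of s and s' with weights b and d.  What is left of the
   r'-dependence is dominated either by e^{-(c + e)(s' - r')} or by the
   coupling term e^{-a|r - r'|}; integrating in r' and then in r yields the
   two bounds 2/((b + d)(c + e)) and 4/(a(b + d)).  The case s < s' is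
   symmetric, splitting off e^{-d(s' - s)} instead.  The smaller of the two
   bounds is at most 10/(BG + a min(B, G)), as one sees by comparing BG with
   a min(B, G). *)

Section ExponentialIntegrals.
Context {R : realType}.
Local Notation mu := (@lebesgue_measure R).

Lemma continuous_subr (a : R) : continuous (fun x : R => x - a).
Proof. by move=> x; apply: continuousB; [exact: cvg_id | exact: cst_continuous]. Qed.

Lemma continuous_subl (q : R) : continuous (fun x : R => q - x).
Proof. by move=> x; apply: continuousB; [exact: cst_continuous | exact: cvg_id]. Qed.

Lemma continuous_expRNM (k : R) {h : R -> R} :
  continuous h -> continuous (fun x => expR (- (k * h x))).
Proof.
move=> ch x; apply: continuous_comp; last exact: continuous_expR.
apply: continuousN; apply: continuousM; [exact: cst_continuous | exact: ch].
Qed.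

Lemma is_derive_expR_tail (k a x : R) : k != 0 ->
  is_derive x 1 (fun x => - (expR (- (k * (x - a))) / k)) (expR (- (k * (x - a)))).
Proof.
move=> k0.
(* used by [is_derive_eq] below through instance resolution *)
have dlin : is_derive x 1 (fun x : R => - (k * (x - a))) (- k).
  have -> : (fun x : R => - (k * (x - a))) = (- k) *: (id - cst a).
    by apply/funext => y; rewrite -mulNr.
  by apply: is_derive_eq; rewrite subr0 scaler1.
have -> : (fun x => - (expR (- (k * (x - a))) / k)) =
          (- k^-1) *: (fun x => expR (- (k * (x - a)))).
  by apply/funext => y; rewrite mulrC -mulNr.
apply: is_derive_eq.
by rewrite -[_ *: _]/(_ * _) mulrN mulrNN mulrCA mulVf // mulr1.
Qed.

Lemma integral_expR_itvcy (k a : R) : 0 < k ->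
  (\int[mu]_(x in `[a, +oo[) (expR (- (k * (x - a))))%:E = (k^-1)%:E)%E.
Proof.
move=> k0; have k_neq0 := lt0r_neq0 k0.
have cF : continuous (fun x => - (expR (- (k * (x - a))) / k)).
  move=> x; apply: (continuousN (f := fun x => expR (- (k * (x - a))) / k)).
  apply: continuousM; last exact: cst_continuous.
  exact: continuous_expRNM _ (continuous_subr a) x.
rewrite (@ge0_continuous_FTC2y R _ (fun x => - (expR (- (k * (x - a))) / k)) a 0).
- by rewrite subrr mulr0 oppr0 expR0 -EFinB sub0r opprK div1r.
- by move=> x _; exact: expR_ge0.
- exact: continuous_subspaceT (continuous_expRNM _ (continuous_subr a)).
- have hexp : expR (- (k * (x - a))) @[x --> +oo] --> 0.
    apply: (@cvg_comp _ _ _ _ (fun z => expR (- z)) _ (pinfty_nbhs R)).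
      exact: gt0_cvgMry k0 (cvg_addrr (- a)).
    exact: cvgr_expR.
  rewrite -oppr0 -(mul0r k^-1); apply: cvgN; exact: cvgM hexp (cvg_cst _).
- by move=> x _; apply: ex_derive; exact: is_derive_expR_tail.
- exact: cvg_at_right_filter (cF a).
- by move=> x _; rewrite derive1E; have [_ ->] := is_derive_expR_tail k a x k_neq0.
Qed.

Lemma measurable_expRNM_sub (k q : R) :
  measurable_fun setT (fun x : R => expR (- (k * (q - x)))).
Proof. exact: continuous_measurable_fun (continuous_expRNM _ (continuous_subl q)). Qed.

Lemma measurable_expRNM_norm (k p : R) :
  measurable_fun setT (fun x : R => expR (- (k * `|x - p|))).
Proof.
apply: continuous_measurable_fun; apply: continuous_expRNM => x.
apply: (continuous_comp (f := fun x => x - p)); [exact: continuous_subr | exact: norm_continuous].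
Qed.

Lemma integral_expR_itvNyo (k q : R) : 0 < k ->
  (\int[mu]_(x in `]-oo, q[) (expR (- (k * (q - x))))%:E = (k^-1)%:E)%E.
Proof.
move=> k0.
rewrite integral_itv_bndo_bndc; last first.
  by apply/measurable_EFinP; apply: measurable_funTS; exact: measurable_expRNM_sub.
have := @ge0_integration_by_substitutionNy R (fun x => expR (- (k * (q - x)))) (- q).
rewrite opprK => ->; last 2 first.
- exact: continuous_subspaceT (continuous_expRNM _ (continuous_subl q)).
- by move=> x _; exact: expR_ge0.
rewrite -(integral_expR_itvcy k (- q) k0).
by apply: eq_integral => x _; rewrite /= !opprK addrC.
Qed.

Lemma integral_expR_norm_le (k p q : R) : 0 < k ->
  (\int[mu]_(x in `]-oo, q[) (expR (- (k * `|x - p|)))%:E <= (2 / k)%:E)%E.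
Proof.
move=> k0.
have mf (D : set R) : measurable_fun D (fun x => (expR (- (k * `|x - p|)))%:E).
  by apply/measurable_EFinP; apply: measurable_funTS; exact: measurable_expRNM_norm.
apply: (@le_trans _ _ (\int[mu]_(x in `[p, +oo[ `|` `]-oo, p[)
                         (expR (- (k * `|x - p|)))%:E)%E).
  apply: (ge0_subset_integral mu _ _ (mf _)) => //; first exact: measurableU.
  by move=> x _; case: (leP p x) => px; [left | right]; rewrite /= in_itv /= ?andbT.
rewrite (ge0_integral_setU mu _ _ (mf _)) //; last first.
  by rewrite -setCitvr; exact/disj_setPCl.
have -> : (\int[mu]_(x in `[p, +oo[) (expR (- (k * `|x - p|)))%:E = (k^-1)%:E)%E.
  rewrite -(integral_expR_itvcy k p k0); apply: eq_integral => x.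
  by rewrite inE /= in_itv /= andbT => px; rewrite ger0_norm // subr_ge0.
have -> : (\int[mu]_(x in `]-oo, p[) (expR (- (k * `|x - p|)))%:E = (k^-1)%:E)%E.
  rewrite -(integral_expR_itvNyo k p k0); apply: eq_integral => x.
  by rewrite inE /= in_itv /= => px; rewrite distrC ger0_norm // subr_ge0 ltW.
by rewrite -EFinD mulr_natl mulr2n.
Qed.

End ExponentialIntegrals.

Section IteratedIntegral.
Context {R : realType}.
Local Notation mu := (@lebesgue_measure R).

(* Unlike [ge0_le_integral], no measurability is required: it is applied to
   inner integrals, whose measurability in the outer variable is not known. *)
Lemma ge0_le_integral_nonmeas (D : set R) (f g : R -> \bar R) :
  (forall x, D x -> (0 <= f x)%E) -> (forall x, D x -> (f x <= g x)%E) ->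
  (\int[mu]_(x in D) f x <= \int[mu]_(x in D) g x)%E.
Proof.
move=> f0 fg.
have g0 x : D x -> (0 <= g x)%E by move=> Dx; exact: le_trans (f0 _ Dx) (fg _ Dx).
rewrite [leLHS]ge0_integralE // [leRHS]ge0_integralE //.
apply: ereal_sup_le => _ [h hf <-]; exists h => // x.
apply: le_trans (hf x) _; rewrite /patch; case: ifP => // /[1!inE] Dx.
exact: fg.
Qed.

Lemma le_iterated_integral_mul {s s' C F G : R} {K : R -> R -> R} (f : R -> R) (g : R -> R -> R) :
  0 <= C -> (forall r r', 0 <= K r r') ->
  (forall r, 0 <= f r) -> (forall r r', 0 <= g r r') ->
  measurable_fun setT f -> (forall r, measurable_fun setT (g r)) ->
  (forall r r', r < s -> r' < s' -> K r r' <= C * (f r * g r r')) ->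
  (\int[mu]_(r in `]-oo, s[) (f r)%:E <= F%:E)%E ->
  (forall r, \int[mu]_(r' in `]-oo, s'[) (g r r')%:E <= G%:E)%E ->
  (\int[mu]_(r in `]-oo, s[) \int[mu]_(r' in `]-oo, s'[) (K r r')%:E
     <= (C * (F * G))%:E)%E.
Proof.
move=> C0 K0 f0 g0 mf mg Kfg intf intg.
have G0 : (0 <= G%:E)%E.
  by apply: le_trans (intg 0); apply: integral_ge0 => r' _; rewrite lee_fin.
have inner r : r < s ->
    (\int[mu]_(r' in `]-oo, s'[) (K r r')%:E <= (C * f r * G)%:E)%E.
  move=> rs.
  apply: (@le_trans _ _ (\int[mu]_(r' in `]-oo, s'[) ((C * f r)%:E * (g r r')%:E))%E).
    apply: ge0_le_integral_nonmeas => r'; first by rewrite lee_fin.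
    by rewrite /= in_itv /= => r's; rewrite -EFinM lee_fin -mulrA; exact: Kfg.
  rewrite ge0_integralZl_EFin //.
  - by rewrite [leRHS]EFinM; apply: lee_wpmul2l => //; rewrite lee_fin mulr_ge0.
  - by move=> r' _; rewrite lee_fin.
  - by apply/measurable_EFinP; exact: measurable_funTS (mg r).
  - by rewrite mulr_ge0.
apply: (@le_trans _ _ (\int[mu]_(r in `]-oo, s[) ((C * G)%:E * (f r)%:E))%E).
  apply: ge0_le_integral_nonmeas => r.
    by move=> _; apply: integral_ge0 => r' _; rewrite lee_fin.
  by rewrite /= in_itv /= => /inner; rewrite -EFinM mulrAC.
rewrite ge0_integralZl_EFin //.
- rewrite (mulrC F) mulrA [leRHS]EFinM; apply: lee_wpmul2l => //.
  by rewrite lee_fin mulr_ge0 // -lee_fin.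
- by move=> r _; rewrite lee_fin.
- by apply/measurable_EFinP; exact: measurable_funTS mf.
- by rewrite mulr_ge0 // -lee_fin.
Qed.

End IteratedIntegral.

Lemma norm_barycenter_le {R : realFieldType} (b d x y r : R) : 0 < b -> 0 < d ->
  (b + d) * `|r - (b * x + d * y) / (b + d)| <= b * `|r - x| + d * `|r - y|.
Proof.
move=> b0 d0; have bd0 : 0 < b + d by rewrite addr_gt0.
rewrite -{1}(gtr0_norm bd0) -normrM.
have -> : (b + d) * (r - (b * x + d * y) / (b + d)) = b * (r - x) + d * (r - y).
  by field; rewrite lt0r_neq0.
apply: le_trans (ler_normD _ _) _.
by rewrite !normrM (gtr0_norm b0) (gtr0_norm d0).
Qed.

Lemma A8_constant_le {R : realFieldType} (a B G : R) : 0 < a -> 0 < B -> 0 < G ->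
  2 / B * Num.min G^-1 (2 / a) <= 10 / (B * G + a * Num.min B G).
Proof.
move=> a0 B0 G0.
set m := Num.min B G.
have mB : m <= B by rewrite /m ge_min lexx.
have m0 : 0 < m by rewrite /m lt_min B0 G0.
have D0 : 0 < B * G + a * m by rewrite addr_gt0 // mulr_gt0.
have [am_le|am_gt] := leP (a * m) (B * G).
- apply: (@le_trans _ _ (2 / B * G^-1)).
    by rewrite ler_wpM2l ?ge_min ?lexx // mulr_ge0 // invr_ge0 ltW.
  rewrite -mulrA -invfM ler_pdivrMr ?mulr_gt0 // mulrAC ler_pdivlMr //.
  nra.
- apply: (@le_trans _ _ (2 / B * (2 / a))).
    by rewrite ler_wpM2l ?ge_min ?lexx ?orbT // mulr_ge0 // invr_ge0 ltW.
  have -> : 2 / B * (2 / a) = 4 / (a * B) by field; rewrite !lt0r_neq0.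
  rewrite ler_pdivrMr ?mulr_gt0 // mulrAC ler_pdivlMr //.
  nra.
Qed.

Section KernelA8.
Context {R : realType} {a b c d e s s' : R}.
Hypotheses (a0 : 0 < a) (b0 : 0 < b) (c0 : 0 < c) (d0 : 0 < d) (e0 : 0 < e).
Local Notation mu := (@lebesgue_measure R).
Local Notation K := (kernelA8 a b c d e s s').
Local Notation iint := (\int[mu]_(r in `]-oo, s[) \int[mu]_(r' in `]-oo, s'[) (K r r')%:E)%E.

Section GeCase.
Hypothesis s's : s' <= s.
Local Notation p := ((b * s + d * s') / (b + d)).

Lemma kernelA8_le_ge_tail (r r' : R) : r < s -> r' < s' ->
  K r r' <= expR (- (e * (s - s'))) *
              (expR (- ((b + d) * `|r - p|)) * expR (- ((c + e) * (s' - r')))).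
Proof.
move=> rs r's'; rewrite /kernelA8 -!expRD ler_expR.
have := norm_barycenter_le _ _ s s' r b0 d0.
have : 0 <= a * `|r - r'| by rewrite mulr_ge0 // ltW.
have -> : `|r' - s'| = s' - r' by rewrite distrC gtr0_norm // subr_gt0.
have -> : `|r' - s| = s - r' by rewrite distrC gtr0_norm // subr_gt0 (lt_le_trans r's').
lra.
Qed.

Lemma kernelA8_le_ge_coupled (r r' : R) : r < s -> r' < s' ->
  K r r' <= expR (- (e * (s - s'))) *
              (expR (- ((b + d) * `|r - p|)) * expR (- (a * `|r' - r|))).
Proof.
move=> rs r's'; rewrite /kernelA8 -!expRD ler_expR (distrC r' r).
have := norm_barycenter_le _ _ s s' r b0 d0.
have : 0 <= c * `|r' - s'| by rewrite mulr_ge0 // ltW.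
have : 0 <= e * (s' - r') by rewrite mulr_ge0 // ?subr_ge0 ltW.
have -> : `|r' - s| = s - r' by rewrite distrC gtr0_norm // subr_gt0 (lt_le_trans r's').
lra.
Qed.

Lemma double_integral_kernelA8_le_ge :
  (iint <= (expR (- (e * (s - s'))) *
            (2 / (b + d) * Num.min (c + e)^-1 (2 / a)))%:E)%E.
Proof.
have B0 : 0 < b + d by rewrite addr_gt0.
have G0 : 0 < c + e by rewrite addr_gt0.
have tail : (iint <= (expR (- (e * (s - s'))) * (2 / (b + d) * (c + e)^-1))%:E)%E.
  apply: (le_iterated_integral_mul (fun r => expR (- ((b + d) * `|r - p|)))
                                   (fun _ r' => expR (- ((c + e) * (s' - r')))));
    try by move=> *; exact: expR_ge0.
  + exact: measurable_expRNM_norm.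
  + by move=> r; exact: measurable_expRNM_sub.
  + exact: kernelA8_le_ge_tail.
  + exact: integral_expR_norm_le.
  + by move=> r; rewrite integral_expR_itvNyo.
have coupled : (iint <= (expR (- (e * (s - s'))) * (2 / (b + d) * (2 / a)))%:E)%E.
  apply: (le_iterated_integral_mul (fun r => expR (- ((b + d) * `|r - p|)))
                                   (fun r r' => expR (- (a * `|r' - r|))));
    try by move=> *; exact: expR_ge0.
  + exact: measurable_expRNM_norm.
  + by move=> r; exact: measurable_expRNM_norm.
  + exact: kernelA8_le_ge_coupled.
  + exact: integral_expR_norm_le.
  + by move=> r; exact: integral_expR_norm_le.
by rewrite /Order.min; case: ifP.
Qed.

End GeCase.

Section LtCase.
Hypothesis ss' : s < s'.
Local Notation q := ((c * s' + e * s) / (c + e)).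

Lemma kernelA8_le_lt_tail (r r' : R) : r < s -> r' < s' ->
  K r r' <= expR (- (d * (s' - s))) *
              (expR (- ((b + d) * (s - r))) * expR (- ((c + e) * `|r' - q|))).
Proof.
move=> rs r's'; rewrite /kernelA8 -!expRD ler_expR.
have := norm_barycenter_le _ _ s' s r' c0 e0.
have : 0 <= a * `|r - r'| by rewrite mulr_ge0 // ltW.
have -> : `|r - s| = s - r by rewrite distrC gtr0_norm // subr_gt0.
have -> : `|r - s'| = s' - r by rewrite distrC gtr0_norm // subr_gt0 (lt_trans rs).
lra.
Qed.

Lemma kernelA8_le_lt_coupled (r r' : R) : r < s -> r' < s' ->
  K r r' <= expR (- (d * (s' - s))) *
              (expR (- ((b + d) * (s - r))) * expR (- (a * `|r' - r|))).
Proof.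
move=> rs r's'; rewrite /kernelA8 -!expRD ler_expR (distrC r' r).
have : 0 <= c * `|r' - s'| by rewrite mulr_ge0 // ltW.
have : 0 <= e * `|r' - s| by rewrite mulr_ge0 // ltW.
have -> : `|r - s| = s - r by rewrite distrC gtr0_norm // subr_gt0.
have -> : `|r - s'| = s' - r by rewrite distrC gtr0_norm // subr_gt0 (lt_trans rs).
lra.
Qed.

Lemma double_integral_kernelA8_le_lt :
  (iint <= (expR (- (d * (s' - s))) *
            (2 / (b + d) * Num.min (c + e)^-1 (2 / a)))%:E)%E.
Proof.
have B0 : 0 < b + d by rewrite addr_gt0.
have G0 : 0 < c + e by rewrite addr_gt0.
have tail : (iint <= (expR (- (d * (s' - s))) * ((b + d)^-1 * (2 / (c + e))))%:E)%E.
  apply: (le_iterated_integral_mul (fun r => expR (- ((b + d) * (s - r))))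
                                   (fun _ r' => expR (- ((c + e) * `|r' - q|))));
    try by move=> *; exact: expR_ge0.
  + exact: measurable_expRNM_sub.
  + by move=> r; exact: measurable_expRNM_norm.
  + exact: kernelA8_le_lt_tail.
  + by rewrite integral_expR_itvNyo.
  + by move=> r; exact: integral_expR_norm_le.
have coupled : (iint <= (expR (- (d * (s' - s))) * ((b + d)^-1 * (2 / a)))%:E)%E.
  apply: (le_iterated_integral_mul (fun r => expR (- ((b + d) * (s - r))))
                                   (fun r r' => expR (- (a * `|r' - r|))));
    try by move=> *; exact: expR_ge0.
  + exact: measurable_expRNM_sub.
  + by move=> r; exact: measurable_expRNM_norm.
  + exact: kernelA8_le_lt_coupled.
  + by rewrite integral_expR_itvNyo.
  + by move=> r; exact: integral_expR_norm_le.
rewrite /Order.min; case: ifP => _.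
- by apply: le_trans tail _; rewrite lee_fin ler_wpM2l ?expR_ge0 // mulrCA mulrA.
- apply: le_trans coupled _; rewrite lee_fin ler_wpM2l ?expR_ge0 //.
  have : 0 <= (b + d)^-1 * a^-1 by rewrite mulr_ge0 // invr_ge0 ltW.
  nra.
Qed.

End LtCase.

End KernelA8.

Theorem propositionA8 (R : realType) (s s' a b c d e : R)
  (ha : 0 < a) (hb : 0 < b) (hc : 0 < c) (hd : 0 < d) (he : 0 < e) :
  (\int[@lebesgue_measure R]_(r in `]-oo, s[)
     \int[@lebesgue_measure R]_(r' in `]-oo, s'[)
        (kernelA8 a b c d e s s' r r')%:E
   <= (10 * expR (- (Num.min d e * `|s - s'|))
       / ((b + d) * (c + e) + a * Num.min (b + d) (c + e)))%:E)%E.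
Proof.
set M := 2 / (b + d) * Num.min (c + e)^-1 (2 / a).
have M_le : M <= 10 / ((b + d) * (c + e) + a * Num.min (b + d) (c + e)).
  by apply: A8_constant_le; rewrite // addr_gt0.
have M0 : 0 <= M.
  by rewrite mulr_ge0 ?divr_ge0 ?ltW ?addr_gt0 // lt_min invr_gt0 addr_gt0 // divr_gt0.
rewrite mulrAC mulrC.
have [s's|ss'] := leP s' s.
- apply: le_trans (double_integral_kernelA8_le_ge ha hb hc hd he s's) _.
  rewrite lee_fin ler_pM ?expR_ge0 // ler_expR lerN2 ger0_norm ?subr_ge0 //.
  by rewrite ler_wpM2r ?subr_ge0 // ge_min lexx orbT.
- apply: le_trans (double_integral_kernelA8_le_lt ha hb hc hd he ss') _.
  rewrite lee_fin ler_pM ?expR_ge0 // ler_expR lerN2 distrC gtr0_norm ?subr_gt0 //.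
  by rewrite ler_wpM2r ?ge_min ?lexx // subr_ge0 ltW.
Qed.
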